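(* Under Assumption 1, let $(x^k)_{k\in\mathbb{N}}$ be generated by PPGA. Then: (i) there exists $a>0$ such that $F(x^{k+1})+\frac a2\|x^{k+1}-x^k\|_2^2\le F(x^k)$ for all $k\in\mathbb{N}$; (ii) there exist $b>0$ and $w^{k+1}\in\partial F(x^{k+1})$ such that $\|w^{k+1}\|_2\le b\|x^{k+1}-x^k\|_2$ for all $k\in\mathbb{N}$.
   Context: Let $f:\mathbb{R}^n\to(-\infty,+\infty]$ be proper lsc, $g,h:\mathbb{R}^n\to\mathbb{R}$, $\Omega:=\{x:g(x)\ne0\}$, $F(x):=\frac{f(x)+h(x)}{g(x)}$ on $\Omega\cap\mathrm{dom}(f)$ and $+\infty$ otherwise. Assumption 1: (i) $f$ locally Lipschitz on $\mathrm{dom}(f)\cap\Omega$; (ii) $g$ locally Lipschitz continuously differentiable and positive on $\Omega\cap\mathrm{dom}(f)$; (iii) $\nabla h$ is $L$-Lipschitz, $L>0$; (iv) $f+h\ge0$ on $\mathrm{dom}(f)$, $\Omega\cap\mathrm{dom}(f)\ne\emptyset$; (v) $\mathrm{prox}_{f-\gamma g}(x)\ne\emptyset$ for all $x$, $\gamma\ge0$; (vi) $F$ lsc and level bounded. $\mathrm{prox}_\varphi(x):=\arg\min_u\{\varphi(u)+\frac12\|u-x\|_2^2\}$. Fréchet subdifferential: $\hat\partial\varphi(x):=\{v:\liminf_{z\to x,z\ne x}\frac{\varphi(z)-\varphi(x)-\langle v,z-x\rangle}{\|z-x\|_2}\ge0\}$. Limiting subdifferential: $\partial\varphi(x):=\{v:\exists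 x^k\to x,\ \varphi(x^k)\to\varphi(x),\ v^k\in\hat\partial\varphi(x^k),\ v^k\to v\}$. PPGA: choose $x^0\in\Omega\cap\mathrm{dom}(f)$ and $0<\underline\alpha\le\alpha_k\le\overline\alpha<1/L$; for $k=0,1,\dots$ set $C_k:=F(x^k)$ and pick any $x^{k+1}\in\mathrm{prox}_{\alpha_k(f-C_kg)}(x^k-\alpha_k\nabla h(x^k))$. *)

From HB Require Import structures.
From mathcomp Require Import all_boot all_order all_algebra.
From mathcomp Require Import all_classical all_reals all_analysis.
Set Implicit Arguments. Unset Strict Implicit. Unset Printing Implicit Defensive.
Import Order.TTheory GRing.Theory Num.Theory.
Import numFieldNormedType.Exports.
Local Open Scope classical_set_scope.
Local Open Scope ring_scope.

Section Defs.
Variables (R : realType) (n : nat).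
Notation vec := 'rV[R]_n.

Definition dot (x y : vec) : R := \sum_(i < n) x ord0 i * y ord0 i.
Definition norm2 (x : vec) : R := Num.sqrt (dot x x).

Definition is_grad (h : vec -> R) (G x : vec) : Prop :=
  forall eps : R, 0 < eps -> exists2 delta : R, 0 < delta &
    forall d : vec, norm2 d < delta -> `|h (x + d) - h x - dot G d| <= eps * norm2 d.

Definition lsc (phi : vec -> \bar R) : Prop :=
  forall (x : vec) (M : R), (M%:E < phi x)%E -> exists2 delta : R, 0 < delta &
    forall z : vec, norm2 (z - x) < delta -> (M%:E < phi z)%E.

Definition level_bounded (phi : vec -> \bar R) : Prop :=
  forall alpha : R, exists M : R, forall x : vec, (phi x <= alpha%:E)%E -> norm2 x <= M.

Definition prox (phi : vec -> \bar R) (x : vec) : set vec :=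
  [set u | forall u' : vec,
     (phi u + (norm2 (u - x) ^+ 2 / 2)%:E <= phi u' + (norm2 (u' - x) ^+ 2 / 2)%:E)%E].

Definition frechet_subdiff (phi : vec -> \bar R) (x : vec) : set vec :=
  [set v | phi x \is a fin_num /\
     forall eps : R, 0 < eps -> exists2 delta : R, 0 < delta &
       forall z : vec, 0 < norm2 (z - x) < delta ->
         ((- (eps * norm2 (z - x)))%:E <= phi z - phi x - (dot v (z - x))%:E)%E].

Definition limiting_subdiff (phi : vec -> \bar R) (x : vec) : set vec :=
  [set v | exists (xs vs : nat -> vec),
     [/\ xs @ \oo --> x,
         (fun j => phi (xs j)) @ \oo --> phi x,
         (forall j, frechet_subdiff phi (xs j) (vs j)) &
         vs @ \oo --> v]].

Definition omega_dom (f : vec -> \bar R) (g : vec -> R) (x : vec) : bool :=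
  (g x != 0) && (f x \is a fin_num).

Definition Fobj (f : vec -> \bar R) (g h : vec -> R) (x : vec) : \bar R :=
  if omega_dom f g x then ((fine (f x) + h x) / g x)%:E else +oo%E.

End Defs.

From HB Require Import structures.
From mathcomp Require Import all_boot all_order all_algebra.
From mathcomp Require Import all_classical all_reals all_analysis.
From mathcomp Require Import ring lra.
Import Order.TTheory GRing.Theory Num.Theory.
Import numFieldNormedType.Exports.
Local Open Scope classical_set_scope.
Local Open Scope ring_scope.
Set Implicit Arguments. Unset Strict Implicit. Unset Printing Implicit Defensive.

(* Write C_k = F(x_k) and N = f + h, so that C_k g(x_k) = N(x_k).  The iterate x_{k+1} is a
   proximal-gradient step for f - C_k g + h at x_k: comparing it with x_k and bounding h by the
   descent lemma gives N(x_{k+1}) + (1/ahi - L)/2 |x_{k+1} - x_k|^2 <= C_k g(x_{k+1}).  This keeps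
   the iterates in Omega ∩ dom f, makes C_k nonincreasing, and gives (i) once g is bounded along
   the iterates.  The iterates stay in a sublevel set of F, which is compact and contained in
   Omega ∩ dom f, so every quantity that is locally Lipschitz there is bounded along the sequence
   and changes by O(|x_{k+1} - x_k|) from one iterate to the next; this applies to g, |grad g|,
   N and hence C_k.  For (ii), the optimality of the prox step makes
   C_k grad g(y) - grad h(x_k) - (y - x_k)/alpha_k a Fréchet subgradient of f at y = x_{k+1}
   (relative to Omega ∩ dom f); adding grad h(y) and applying the quotient rule to F = N/g gives
   w = ((C_k - C_{k+1}) grad g(y) - (y - x_k)/alpha_k + grad h(y) - grad h(x_k)) / g(y),
   and each term is O(|x_{k+1} - x_k|). *)

Section Euclid.
Variables (R : realType) (n : nat).
Notation vec := 'rV[R]_n.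
Implicit Types (x y z : vec) (a : R).

Lemma dotC x y : dot x y = dot y x.
Proof. by apply: eq_bigr => i _; rewrite mulrC. Qed.

Lemma dotDl x y z : dot (x + y) z = dot x z + dot y z.
Proof. by rewrite /dot -big_split; apply: eq_bigr => i _; rewrite mxE mulrDl. Qed.

Lemma dotDr x y z : dot z (x + y) = dot z x + dot z y.
Proof. by rewrite dotC dotDl !(dotC z). Qed.

Lemma dotZl a x y : dot (a *: x) y = a * dot x y.
Proof. by rewrite /dot mulr_sumr; apply: eq_bigr => i _; rewrite mxE mulrA. Qed.

Lemma dotZr a x y : dot y (a *: x) = a * dot y x.
Proof. by rewrite dotC dotZl dotC. Qed.

Lemma dotNl x y : dot (- x) y = - dot x y.
Proof. by rewrite -scaleN1r dotZl mulN1r. Qed.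

Lemma dotBl x y z : dot (x - y) z = dot x z - dot y z.
Proof. by rewrite dotDl dotNl. Qed.

Lemma dotBr x y z : dot z (x - y) = dot z x - dot z y.
Proof. by rewrite !(dotC z) dotBl. Qed.

Lemma dot0l y : dot 0 y = 0.
Proof. by rewrite -(scale0r (0 : vec)) dotZl mul0r. Qed.

Lemma dotxx_ge0 x : 0 <= dot x x.
Proof. by apply: sumr_ge0 => i _; rewrite -expr2 sqr_ge0. Qed.

Lemma norm2_sqr x : norm2 x ^+ 2 = dot x x.
Proof. by rewrite /norm2 sqr_sqrtr // dotxx_ge0. Qed.

Lemma norm2_ge0 x : 0 <= norm2 x.
Proof. exact: sqrtr_ge0. Qed.

Lemma norm2Z a x : norm2 (a *: x) = `|a| * norm2 x.
Proof. by rewrite /norm2 dotZl dotZr mulrA -expr2 sqrtrM ?sqr_ge0 // sqrtr_sqr. Qed.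

Lemma norm2N x : norm2 (- x) = norm2 x.
Proof. by rewrite -scaleN1r norm2Z normrN normr1 mul1r. Qed.

Lemma norm2_distC x y : norm2 (x - y) = norm2 (y - x).
Proof. by rewrite -norm2N opprB. Qed.

Lemma norm2_0 : norm2 (0 : vec) = 0.
Proof. by rewrite /norm2 dot0l sqrtr0. Qed.

Lemma norm2_eq0 x : norm2 x = 0 -> x = 0.
Proof.
move=> x0; have /psumr_eq0P xx0 : dot x x = 0 by rewrite -norm2_sqr x0 expr0n.
apply/rowP => i; rewrite mxE.
have /eqP := xx0 (fun j _ => ltac:(by rewrite -expr2 sqr_ge0)) i isT.
by rewrite -expr2 sqrf_eq0 => /eqP.
Qed.

Lemma norm2_sqrD x y :
  norm2 (x + y) ^+ 2 = norm2 x ^+ 2 + 2 * dot x y + norm2 y ^+ 2.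
Proof. by rewrite !norm2_sqr !dotDl !dotDr (dotC y x); ring. Qed.

Lemma cauchy_schwarz x y : `|dot x y| <= norm2 x * norm2 y.
Proof.
have sqr_le : dot x y ^+ 2 <= dot x x * dot y y.
  have [xx0|xx_neq0] := eqVneq (dot x x) 0.
    have -> : x = 0 by apply: norm2_eq0; rewrite /norm2 xx0 sqrtr0.
    by rewrite dot0l expr0n /= dot0l mul0r.
  have xx_gt0 : 0 < dot x x by rewrite lt_def xx_neq0 dotxx_ge0.
  have := dotxx_ge0 ((dot x x) *: y - (dot x y) *: x).
  rewrite !dotBl !dotBr !dotZl !dotZr (dotC y x) => H.
  have : 0 <= dot x x * (dot x x * dot y y - dot x y ^+ 2) by nra.
  by rewrite pmulr_rge0 // subr_ge0.
rewrite -(ger0_norm (norm2_ge0 x)) -(ger0_norm (norm2_ge0 y)) -normrM.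
rewrite -ler_sqr ?nnegrE ?normr_ge0 // !real_normK ?num_real //.
by rewrite exprMn !norm2_sqr.
Qed.

Lemma norm2_triangle x y : norm2 (x + y) <= norm2 x + norm2 y.
Proof.
rewrite -ler_sqr ?nnegrE ?addr_ge0 ?norm2_ge0 // norm2_sqrD.
have := cauchy_schwarz x y; have := ler_norm (dot x y); nra.
Qed.

Lemma norm2_dist_le x y : norm2 (x - y) <= norm2 x + norm2 y.
Proof. by rewrite -(norm2N y) norm2_triangle. Qed.

Lemma norm2_lipschitz x y : `|norm2 x - norm2 y| <= norm2 (x - y).
Proof.
have := norm2_triangle (x - y) y; have := norm2_triangle (y - x) x.
rewrite !subrK norm2_distC ler_norml; lra.
Qed.

Lemma norm2_le_dist x y z : norm2 (x - z) <= norm2 (x - y) + norm2 (y - z).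
Proof. by have := norm2_triangle (x - y) (y - z); rewrite addrA subrK. Qed.

Lemma coord_le_norm2 x i : `|x ord0 i| <= norm2 x.
Proof.
rewrite -(ger0_norm (norm2_ge0 x)) -ler_sqr ?nnegrE ?normr_ge0 //.
rewrite !real_normK ?num_real // norm2_sqr /dot (bigD1 i) //= -expr2 lerDl.
by apply: sumr_ge0 => j _; rewrite -expr2 sqr_ge0.
Qed.

Lemma norm2_le_coord x e : 0 <= e -> (forall i, `|x ord0 i| <= e) ->
  norm2 x <= n%:R * e.
Proof.
move=> e0 xe; rewrite -(ger0_norm (norm2_ge0 x)).
rewrite -ler_sqr ?nnegrE ?normr_ge0 ?mulr_ge0 ?ler0n //.
rewrite real_normK ?num_real // norm2_sqr.
apply: (@le_trans _ _ (\sum_(i < n) e ^+ 2)).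
  apply: ler_sum => i _; rewrite -expr2 -real_normK ?num_real //.
  by rewrite lerXn2r ?nnegrE ?normr_ge0.
rewrite sumr_const card_ord exprMn -[e ^+ 2 *+ n]mulr_natl.
apply: ler_wpM2r; first by rewrite sqr_ge0.
by rewrite -natrX ler_nat; case: n => // m; rewrite expnS leq_pmulr.
Qed.

Lemma ball_convex (c y z : vec) (del t : R) :
  norm2 (y - c) < del -> norm2 (z - c) < del -> 0 <= t <= 1 ->
  norm2 (y + t *: (z - y) - c) < del.
Proof.
move=> yc zc /andP [t0 t1].
have -> : y + t *: (z - y) - c = (1 - t) *: (y - c) + t *: (z - c).
  by apply/rowP => i; rewrite !mxE; ring.
apply: le_lt_trans (norm2_triangle _ _) _; rewrite !norm2Z !ger0_norm ?subr_ge0 //.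
set m := Num.max (norm2 (y - c)) (norm2 (z - c)).
have : (1 - t) * norm2 (y - c) <= (1 - t) * m by rewrite ler_wpM2l ?subr_ge0 ?le_max ?lexx.
have : t * norm2 (z - c) <= t * m by rewrite ler_wpM2l ?le_max ?lexx ?orbT.
have : m < del by rewrite gt_max yc zc.
lra.
Qed.

End Euclid.

Section Calculus.
Variables (R : realType) (n : nat).
Notation vec := 'rV[R]_n.

Lemma is_derive_line (phi : vec -> R) (G y d : vec) (t : R) :
  is_grad phi G (y + t *: d) ->
  is_derive t (1 : R) (fun s => phi (y + s *: d)) (dot G d).
Proof.
move=> phiG.
suff quot : (fun s : R => s^-1 *: (phi (y + (s *: 1 + t) *: d) - phi (y + t *: d)))
    @ 0^' --> dot G d.
  by apply: DeriveDef; [exact: (cvgP _ quot) | exact: cvg_lim quot].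
apply/cvgrPdist_le => e e0.
set c := norm2 d + 1.
have c0 : 0 < c by rewrite /c ltr_wpDl ?norm2_ge0.
have [del del0 phi_del] := phiG (e / c) (divr_gt0 e0 c0).
apply/nbhs_ballP; exists (del / c); first exact: divr_gt0.
move=> s; rewrite /ball /= sub0r normrN => s_del s0.
have -> : y + (s *: 1 + t) *: d = (y + t *: d) + s *: d.
  by rewrite scalerDl addrAC addrA /GRing.scale /= mulr1.
have sd_del : norm2 (s *: d) < del.
  rewrite norm2Z; move: s_del; rewrite ltr_pdivlMr // => s_del.
  by apply: le_lt_trans s_del; rewrite ler_wpM2l ?normr_ge0 // /c lerDl.
have := phi_del _ sd_del; rewrite dotZr norm2Z.
set X := phi _ - phi _ => HX.
have -> : dot G d - s^-1 *: X = s^-1 * (s * dot G d - X).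
  by rewrite -[s^-1 *: X]/(s^-1 * X); field.
rewrite normrM normfV distrC ler_pdivrMl ?normr_gt0 //.
apply: le_trans HX _; rewrite mulrCA ler_wpM2l ?normr_ge0 //.
rewrite -[X in _ <= X](divfK (lt0r_neq0 c0)) ler_wpM2l ?divr_ge0 ?(ltW e0) ?(ltW c0) //.
by rewrite /c lerDl.
Qed.

Lemma ball_lipschitz_of_grad (phi : vec -> R) (G : vec -> vec) (c : vec) (del M : R) :
  (forall v, norm2 (v - c) < del -> is_grad phi (G v) v /\ norm2 (G v) <= M) ->
  forall y z, norm2 (y - c) < del -> norm2 (z - c) < del ->
  `|phi z - phi y| <= M * norm2 (z - y).
Proof.
move=> phiG y z yc zc; set d := z - y.
have D (t : R) : 0 <= t <= 1 ->
    is_derive t (1 : R) (fun s => phi (y + s *: d)) (dot (G (y + t *: d)) d).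
  by move=> t01; apply: is_derive_line; have [] := phiG _ (ball_convex yc zc t01).
have -> : phi z - phi y = phi (y + 1 *: d) - phi (y + 0 *: d).
  by rewrite scale1r scale0r addr0 /d [y + _]addrC subrK.
have [||s s01 ->] := @MVT_segment R (fun s => phi (y + s *: d))
    (fun s => dot (G (y + s *: d)) d) 0 1 ler01.
- by move=> s; rewrite in_itv /= => /andP [s0 s1]; apply: D; rewrite !ltW.
- by apply: derivable_within_continuous => s; rewrite in_itv /= => /D [].
rewrite subr0 mulr1; apply: le_trans (cauchy_schwarz _ _) _.
rewrite ler_wpM2r ?norm2_ge0 //.
by move: s01; rewrite in_itv /= => /(ball_convex yc zc) /phiG [].
Qed.

Lemma descent_lemma (phi : vec -> R) (G : vec -> vec) (L : R) :
  (forall u, is_grad phi (G u) u) ->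
  (forall u v, norm2 (G u - G v) <= L * norm2 (u - v)) ->
  forall y d, phi (y + d) <= phi y + dot (G y) d + L / 2 * norm2 d ^+ 2.
Proof.
move=> phiG G_lip y d.
set a := dot (G y) d; set c := L / 2 * norm2 d ^+ 2.
set psi := fun s : R => phi (y + s *: d).
set lin := fun s : R => s * a.
set quad := fun s : R => s ^+ 2 * c.
(* the Lipschitz bound on [G] makes [chi' <= 0] on [0, 1] *)
set chi := (psi - lin) - quad.
have D s : is_derive s (1 : R) chi (dot (G (y + s *: d)) d - a - 2 * s * c).
  apply: is_deriveB; first apply: is_deriveB.
  - exact: is_derive_line.
  - apply: (is_derive_eq (is_deriveM (is_derive_id s 1) (is_derive_cst a s 1))).
    by rewrite /GRing.scale /= mulr0 add0r mulr1.
  - apply: (is_derive_eq (is_deriveM (is_deriveX 2 (is_derive_id s 1)) (is_derive_cst c s 1))).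
    by rewrite /GRing.scale /= expr1; ring.
have : chi 1 <= chi 0.
  apply: (@ler0_derive1_le_cc R chi 0 1); last 3 first.
  - by rewrite in_itv /= lexx ler01.
  - by rewrite in_itv /= lexx ler01.
  - exact: ler01.
  - by move=> s _; case: (D s).
  - move=> s; rewrite in_itv /= => /andP [s0 s1].
    rewrite derive1E; case: (D s) => _ ->; rewrite /a -dotBl.
    have := ler_norm (dot (G (y + s *: d) - G y) d).
    have := cauchy_schwarz (G (y + s *: d) - G y) d.
    have := G_lip (y + s *: d) y.
    rewrite addrAC subrr add0r norm2Z ger0_norm ?(ltW s0) // => Glip.
    have : norm2 (G (y + s *: d) - G y) * norm2 d <= L * (s * norm2 d) * norm2 d.
      by rewrite ler_wpM2r ?norm2_ge0.
    have := norm2_ge0 d; rewrite /c; nra.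
  - by apply: derivable_within_continuous => s _; case: (D s).
rewrite /chi !fctE /psi /lin /quad /= !scale1r !scale0r addr0 !mul0r expr0n /= mul0r !subr0.
rewrite expr1n !mul1r.
lra.
Qed.

Lemma is_grad_continuous (phi : vec -> R) (G p : vec) (eta : R) :
  is_grad phi G p -> 0 < eta ->
  exists2 del : R, 0 < del & forall v, norm2 (v - p) < del -> `|phi v - phi p| <= eta.
Proof.
move=> phiG eta0; have [del del0 phi_del] := phiG 1 ltr01.
have c0 : 0 < norm2 G + 1 by rewrite ltr_wpDl ?norm2_ge0.
exists (Num.min del (eta / (norm2 G + 1))); first by rewrite lt_min del0 divr_gt0.
move=> v; rewrite lt_min => /andP [vp]; rewrite ltr_pdivlMr // => vp_eta.
move: (phi_del _ vp); rewrite [p + _]addrC subrK mul1r.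
have := cauchy_schwarz G (v - p); have := norm2_ge0 (v - p); have := norm2_ge0 G.
have : `|phi v - phi p| <= `|phi v - phi p - dot G (v - p)| + `|dot G (v - p)|.
  by apply: le_trans (ler_normD _ _); rewrite subrK.
nra.
Qed.

End Calculus.

Section FrechetSubgradient.
Variables (R : realType) (n : nat).
Notation vec := 'rV[R]_n.
Implicit Types (D : set vec) (N phi g : vec -> R).

Definition frechet_subgrad_on D N (y v : vec) : Prop :=
  forall eps : R, 0 < eps -> exists2 delta : R, 0 < delta &
    forall z, D z -> norm2 (z - y) < delta ->
      - (eps * norm2 (z - y)) <= N z - N y - dot v (z - y).

Lemma frechet_subgrad_on_grad D N (y G : vec) :
  is_grad N G y -> frechet_subgrad_on D N y G.
Proof.
move=> NG eps /NG [del del0 Ndel]; exists del => // z _ zy.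
have := Ndel _ zy; rewrite [y + _]addrC subrK => /ler_normlP [].
lra.
Qed.

Lemma frechet_subgrad_onD D N1 N2 (y v1 v2 : vec) :
  frechet_subgrad_on D N1 y v1 -> frechet_subgrad_on D N2 y v2 ->
  frechet_subgrad_on D (fun z => N1 z + N2 z) y (v1 + v2).
Proof.
move=> N1v1 N2v2 eps eps0.
have eps20 : 0 < eps / 2 by rewrite divr_gt0.
have [del1 del10 N1del] := N1v1 _ eps20; have [del2 del20 N2del] := N2v2 _ eps20.
exists (Num.min del1 del2) => [|z Dz]; first by rewrite lt_min del10 del20.
rewrite lt_min => /andP [zy1 zy2].
have := N1del _ Dz zy1; have := N2del _ Dz zy2; rewrite dotDl; lra.
Qed.

Lemma frechet_subgrad_onZ D N (c : R) (y v : vec) : 0 <= c ->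
  frechet_subgrad_on D N y v -> frechet_subgrad_on D (fun z => c * N z) y (c *: v).
Proof.
move=> c0 Nv eps eps0.
have c1 : 0 < c + 1 by rewrite ltr_wpDl.
have [del del0 Ndel] := Nv _ (divr_gt0 eps0 c1).
exists del => // z Dz zy; have := Ndel _ Dz zy.
set X := N z - N y - dot v (z - y); set r := norm2 (z - y) => Xlow.
have -> : c * N z - c * N y - dot (c *: v) (z - y) = c * X by rewrite dotZl /X; ring.
have ceps : c * (eps / (c + 1)) <= eps.
  by rewrite mulrCA ger_pMr // ler_pdivrMr // mul1r lerDl.
have : c * (eps / (c + 1)) * r <= eps * r by rewrite ler_wpM2r ?norm2_ge0.
have : c * - (eps / (c + 1) * r) <= c * X by rewrite ler_wpM2l.
lra.
Qed.

Lemma frechet_subgrad_on_quadratic D N (c : R) (y v : vec) :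
  (forall z, D z -> - (c * norm2 (z - y) ^+ 2) <= N z - N y - dot v (z - y)) ->
  frechet_subgrad_on D N y v.
Proof.
move=> Nv eps eps0.
have c1 : 0 < `|c| + 1 by rewrite ltr_wpDl.
exists (eps / (`|c| + 1)) => [|z Dz]; first exact: divr_gt0.
rewrite ltr_pdivlMr // => zy; apply: le_trans (Nv _ Dz); rewrite lerN2.
have r0 := norm2_ge0 (z - y).
have cr : `|c| * norm2 (z - y) <= eps by have := normr_ge0 c; nra.
have : `|c| * norm2 (z - y) * norm2 (z - y) <= eps * norm2 (z - y) by rewrite ler_wpM2r.
have : c * norm2 (z - y) ^+ 2 <= `|c| * norm2 (z - y) ^+ 2.
  by rewrite ler_wpM2r ?sqr_ge0 ?ler_norm.
rewrite expr2; lra.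
Qed.

Lemma frechet_subgrad_on_div D N g (y u G : vec) :
  frechet_subgrad_on D N y u -> is_grad g G y -> 0 < g y ->
  frechet_subgrad_on D (fun z => N z / g z) y ((g y)^-1 *: (u - (N y / g y) *: G)).
Proof.
move=> Nu gG gy0 eps eps0.
set Q := N y / g y; set w := (g y)^-1 *: (u - Q *: G).
set e1 := eps * g y / (4 * (1 + `|Q|)).
have e10 : 0 < e1 by rewrite !divr_gt0 ?mulr_gt0 ?ltr_wpDr.
set eta := Num.min (g y / 2) (eps * g y / (4 * (norm2 w + 1))).
have eta0 : 0 < eta by rewrite lt_min !divr_gt0 ?mulr_gt0 ?ltr_wpDl ?norm2_ge0.
have [del1 del10 Ndel] := Nu _ e10.
have [del2 del20 gdel] := gG _ e10.
have [del3 del30 gc] := is_grad_continuous gG eta0.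
exists (Num.min del1 (Num.min del2 del3)); first by rewrite !lt_min del10 del20 del30.
move=> z Dz; rewrite !lt_min => /and3P [zy1 zy2 zy3].
set e := z - y; set r := norm2 e; have r0 : 0 <= r by exact: norm2_ge0.
have gzy := gc _ zy3.
have eta_le1 : eta <= g y / 2 by rewrite /eta ge_min lexx.
have eta_le2 : eta <= eps * g y / (4 * (norm2 w + 1)) by rewrite /eta ge_min lexx orbT.
have gz_ge : g y / 2 <= g z by move: gzy; rewrite ler_norml; lra.
have gz0 : 0 < g z by apply: lt_le_trans gz_ge; rewrite divr_gt0.
have NQ : N y = Q * g y by rewrite /Q divfK ?lt0r_neq0.
have gw : g y * dot w e = dot u e - Q * dot G e.
  by rewrite /w dotZl mulrA mulfV ?lt0r_neq0 // mul1r dotBl dotZl.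
have Nlow := Ndel _ Dz zy1.
have glin : `|g z - g y - dot G e| <= e1 * r.
  by have := gdel _ zy2; rewrite /e [y + _]addrC subrK.
have Qglin : `|Q * (g z - g y - dot G e)| <= `|Q| * (e1 * r).
  by rewrite normrM ler_wpM2l.
have wcross : `|(g y - g z) * dot w e| <= eta * (norm2 w * r).
  rewrite normrM distrC; apply: ler_pM; [exact: normr_ge0 | exact: normr_ge0 | exact: gzy | exact: cauchy_schwarz].
have eta_w : eta * norm2 w <= eps * g y / 4.
  move: eta_le2; rewrite ler_pdivlMr ?mulr_gt0 ?ltr_wpDl ?norm2_ge0 // => eta_le.
  have := norm2_ge0 w; have := ltW eta0; have := ltW eps0; have := ltW gy0; nra.
have e1Q : e1 * (1 + `|Q|) = eps * g y / 4.
  by rewrite /e1; field; rewrite lt0r_neq0 // ltr_wpDr.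
(* [X] collects the first-order remainders of [N] and [g] plus the cross term [(g y - g z) <w, e>] *)
set X := N z - Q * g z - g z * dot w e.
have X_low : - (eps * g z * r) <= X.
  have -> : X = (N z - N y - dot u e) - Q * (g z - g y - dot G e) + (g y - g z) * dot w e.
    have du : dot u e = g y * dot w e + Q * dot G e by rewrite gw; ring.
    by rewrite /X NQ du; ring.
  have := ler_norm (Q * (g z - g y - dot G e)); have := ler_norm (- ((g y - g z) * dot w e)).
  rewrite normrN.
  have : eps * (g y / 2) * r <= eps * g z * r.
    by apply: ler_wpM2r => //; apply: ler_wpM2l => //; exact: ltW.
  have : `|Q| * (e1 * r) + e1 * r = eps * g y / 4 * r by rewrite -e1Q; ring.
  have : eta * (norm2 w * r) <= eps * g y / 4 * r by rewrite mulrA; apply: ler_wpM2r.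
  move: Nlow; rewrite -/e -/r; lra.
have -> : N z / g z - N y / g y - dot w e = X / g z.
  by rewrite -/Q /X; field; rewrite lt0r_neq0.
by rewrite ler_pdivlMr // mulNr mulrAC.
Qed.

Lemma frechet_subdiff_of_subgrad_on (Phi : vec -> \bar R) D psi (y v : vec) :
  (forall z, D z -> Phi z = (psi z)%:E) -> (forall z, ~ D z -> Phi z = +oo%E) ->
  D y -> frechet_subgrad_on D psi y v -> frechet_subdiff Phi y v.
Proof.
move=> Phi_D Phi_out Dy psiv; split; first by rewrite Phi_D.
move=> eps /psiv [del del0 psidel]; exists del => // z /andP [_ zy].
have [Dz|nDz] := pselect (D z); last by rewrite Phi_out // Phi_D // leey.
by rewrite !Phi_D // -!EFinB lee_fin psidel.
Qed.

Lemma prox_gradient_step_le phi (G x y z : vec) (al : R) : 0 < al ->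
  al * phi y + norm2 (y - (x - al *: G)) ^+ 2 / 2 <=
    al * phi z + norm2 (z - (x - al *: G)) ^+ 2 / 2 ->
  phi y + dot G (y - x) + norm2 (y - x) ^+ 2 / (2 * al) <=
    phi z + dot G (z - x) + norm2 (z - x) ^+ 2 / (2 * al).
Proof.
move=> al0.
have sqr_shift (t : vec) : norm2 (t - (x - al *: G)) ^+ 2 =
    norm2 (t - x) ^+ 2 + 2 * al * dot G (t - x) + al ^+ 2 * norm2 G ^+ 2.
  rewrite opprB addrCA (norm2_sqrD (al *: G)) norm2Z dotZl exprMn real_normK ?num_real //.
  by rewrite dotC; ring.
have half (t : R) : al * (t / (2 * al)) = t / 2 by field; rewrite lt0r_neq0.
rewrite !sqr_shift => yz; rewrite -(ler_pM2l al0) !mulrDr !half; lra.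
Qed.

Lemma frechet_subgrad_on_prox D phi (G x y : vec) (al : R) : 0 < al ->
  (forall z, D z -> phi y + dot G (y - x) + norm2 (y - x) ^+ 2 / (2 * al) <=
     phi z + dot G (z - x) + norm2 (z - x) ^+ 2 / (2 * al)) ->
  frechet_subgrad_on D phi y (- (G + al^-1 *: (y - x))).
Proof.
move=> al0 phi_min; apply: (@frechet_subgrad_on_quadratic _ _ (al^-1 / 2)) => z Dz.
have := phi_min _ Dz.
have -> : z - x = (z - y) + (y - x) by rewrite addrA subrK.
have div2al (t : R) : t / (2 * al) = al^-1 * t / 2 by rewrite invfM; ring.
rewrite (norm2_sqrD (z - y)) (dotDr (z - y)) !div2al => yz.
rewrite dotNl dotDl dotZl (dotC (y - x)); lra.
Qed.


Lemma frechet_subdiff_limiting (Phi : vec -> \bar R) (y v : vec) :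
  frechet_subdiff Phi y v -> limiting_subdiff Phi y v.
Proof. by exists (fun=> y), (fun=> v); split=> //; exact: cvg_cst. Qed.

End FrechetSubgradient.

Section Sequences.
Variables (R : realType) (n : nat).
Notation vec := 'rV[R]_n.
Implicit Types (D : set vec) (phi : vec -> R).

Definition cluster_point (s : nat -> vec) (c : vec) : Prop :=
  forall del : R, 0 < del -> forall J : nat, exists j, (J <= j)%N /\ norm2 (s j - c) < del.

Lemma sublevel_cluster_point (Phi : vec -> \bar R) (alpha : R) (s : nat -> vec) :
  lsc Phi -> level_bounded Phi -> (forall j, (Phi (s j) <= alpha%:E)%E) ->
  exists2 c, (Phi c <= alpha%:E)%E & cluster_point s c.
Proof.
move=> Phi_lsc Phi_lb s_le.
have [M sublevelM] := Phi_lb alpha.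
set K := [set v : vec | forall i, `[- M, M]%classic (v ord0 i)].
have K_compact : compact K.
  exact: (@rV_compact _ n (fun=> `[- M, M]%classic) (fun=> @segment_compact R (- M) M)).
have s_K : (s @ \oo) K.
  apply: filterS (nbhs_infty_ge 0) => j _ i; rewrite /= in_itv /= -ler_norml.
  exact: le_trans (coord_le_norm2 _ _) (sublevelM _ (s_le j)).
have [c [_ c_clust]] := K_compact _ _ s_K.
have c_cluster : cluster_point s c.
  move=> del del0 J.
  have tail_J : (s @ \oo) (s @` [set j | (J <= j)%N]).
    by apply: filterS (nbhs_infty_ge J) => j Jj; exists j.
  have n1 : 0 < n%:R + 1 :> R by rewrite ltr_wpDl ?ler0n.
  (* a sup-norm ball of radius [del / (n + 1)] lies in the Euclidean ball of radius [del] *)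
  have ball_c : nbhs c [set v | norm2 (v - c) < del].
    apply/nbhs_ballP; exists (del / (n%:R + 1)); first exact: divr_gt0.
    move=> v [_ vc] /=; apply: (@le_lt_trans _ _ (n%:R * (del / (n%:R + 1)))).
      apply: norm2_le_coord => [|i]; first by rewrite divr_ge0 ?ltW.
      by rewrite !mxE distrC ltW //; exact: vc ord0 i.
    by rewrite mulrA ltr_pdivrMr // mulrC ltr_pM2l // ltrDl.
  by have [_ [[j Jj <-] sj_c]] := c_clust _ _ tail_J ball_c; exists j.
exists c => //; rewrite leNgt; apply/negP => /Phi_lsc [del del0 Phi_gt].
have [j [_ sj_c]] := c_cluster del del0 0%N.
by have := Phi_gt _ sj_c; rewrite ltNge s_le.
Qed.

Definition locally_lipschitz_on D phi : Prop :=
  forall c, D c -> exists2 del : R, 0 < del & exists K : R,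
    forall y z, D y -> D z -> norm2 (y - c) < del -> norm2 (z - c) < del ->
      `|phi y - phi z| <= K * norm2 (y - z).

Definition locally_lipschitz_grad D phi (G : vec -> vec) : Prop :=
  forall c, D c -> exists2 del : R, 0 < del & exists K : R,
    forall y z, norm2 (y - c) < del -> norm2 (z - c) < del ->
      is_grad phi (G y) y /\ norm2 (G y - G z) <= K * norm2 (y - z).

Lemma locally_lipschitz_onD D phi1 phi2 :
  locally_lipschitz_on D phi1 -> locally_lipschitz_on D phi2 ->
  locally_lipschitz_on D (fun v => phi1 v + phi2 v).
Proof.
move=> lip1 lip2 c Dc.
have [del1 del10 [K1 phi1K]] := lip1 c Dc; have [del2 del20 [K2 phi2K]] := lip2 c Dc.
exists (Num.min del1 del2); first by rewrite lt_min del10 del20.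
exists (K1 + K2) => y z Dy Dz; rewrite !lt_min => /andP [y1 y2] /andP [z1 z2].
have := phi1K _ _ Dy Dz y1 z1; have := phi2K _ _ Dy Dz y2 z2.
have := ler_normD (phi1 y - phi1 z) (phi2 y - phi2 z).
have -> : phi1 y - phi1 z + (phi2 y - phi2 z) = phi1 y + phi2 y - (phi1 z + phi2 z).
  by ring.
lra.
Qed.

Lemma locally_lipschitz_on_grad D phi G :
  locally_lipschitz_grad D phi G -> locally_lipschitz_on D phi.
Proof.
move=> lipG c /lipG [del del0 [K phiG]].
have cc : norm2 (c - c) < del by rewrite subrr norm2_0.
exists del => //; exists (norm2 (G c) + `|K| * del) => y z _ _ yc zc.
apply: (ball_lipschitz_of_grad (G := G) (c := c) (del := del)) zc yc => v vc.
have [v_grad Gvc] := phiG _ _ vc cc; split => //.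
have := norm2_triangle (G v - G c) (G c); rewrite subrK.
have : K * norm2 (v - c) <= `|K| * del.
  apply: le_trans (ler_norm _) _; rewrite normrM (ger0_norm (norm2_ge0 _)).
  by rewrite ler_wpM2l ?normr_ge0 ?ltW.
lra.
Qed.

Lemma locally_lipschitz_on_norm_grad D phi G :
  locally_lipschitz_grad D phi G -> locally_lipschitz_on D (fun v => norm2 (G v)).
Proof.
move=> lipG c /lipG [del del0 [K phiG]]; exists del => //; exists K => y z _ _ yc zc.
by apply: le_trans (norm2_lipschitz _ _) _; have [] := phiG _ _ yc zc.
Qed.

Section AlongSequence.
Variables (D : set vec) (s : nat -> vec).
Hypothesis s_D : forall k, D (s k).
Hypothesis s_cluster : forall kk : nat -> nat, exists2 c, D c & cluster_point (s \o kk) c.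

(* a violating subsequence would accumulate at a point of [D], where [Q] is bounded *)
Lemma bounded_of_locally_bounded (Q : nat -> R) :
  (forall c, D c -> exists2 del : R, 0 < del & exists B : R,
      forall k, norm2 (s k - c) < del -> Q k <= B) ->
  exists B, forall k, Q k <= B.
Proof.
move=> Q_loc; apply: contrapT => Q_unbounded.
have Q_large (j : nat) : exists k, j%:R < Q k.
  apply: contrapT => Q_le; apply: Q_unbounded; exists j%:R => k.
  by rewrite leNgt; apply/negP => jQ; apply: Q_le; exists k.
have [kk Qkk] := choice Q_large.
have [c Dc c_cluster] := s_cluster kk.
have [del del0 [B QB]] := Q_loc c Dc.
have [j [Jj skk_c]] := c_cluster del del0 (Num.Def.archi_bound `|B|).
have := QB _ skk_c; have := Qkk j; have := archi_boundP (normr_ge0 B).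
have : (Num.Def.archi_bound `|B|)%:R <= j%:R :> R by rewrite ler_nat.
have := ler_norm B; lra.
Qed.

Lemma locally_lipschitz_bounded phi :
  locally_lipschitz_on D phi -> exists B, forall k, `|phi (s k)| <= B.
Proof.
move=> phi_lip; apply: bounded_of_locally_bounded => c Dc.
have [del del0 [K phiK]] := phi_lip c Dc.
have cc : norm2 (c - c) < del by rewrite subrr norm2_0.
exists del => //; exists (`|phi c| + `|K| * del) => k skc.
have := phiK _ _ (s_D k) Dc skc cc.
have := ler_normD (phi (s k) - phi c) (phi c); rewrite subrK.
have : K * norm2 (s k - c) <= `|K| * del.
  apply: le_trans (ler_norm _) _; rewrite normrM (ger0_norm (norm2_ge0 _)).
  by rewrite ler_wpM2l ?normr_ge0 ?ltW.
lra.
Qed.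

Lemma locally_lipschitz_bounded_below phi :
  locally_lipschitz_on D phi -> (forall c, D c -> 0 < phi c) ->
  exists2 m, 0 < m & forall k, m <= phi (s k).
Proof.
move=> phi_lip phi_pos.
have [B invB] : exists B, forall k, (phi (s k))^-1 <= B.
  apply: bounded_of_locally_bounded => c Dc.
  have [del del0 [K phiK]] := phi_lip c Dc.
  have cc : norm2 (c - c) < del by rewrite subrr norm2_0.
  have phic := phi_pos c Dc.
  have K1 : 0 < `|K| + 1 by rewrite ltr_wpDl.
  exists (Num.min del (phi c / (2 * (`|K| + 1)))).
    by rewrite lt_min del0 !divr_gt0 ?mulr_gt0.
  exists (2 / phi c) => k; rewrite lt_min => /andP [skc1].
  rewrite ltr_pdivlMr ?mulr_gt0 // => skc2.
  have := phiK _ _ (s_D k) Dc skc1 cc; rewrite ler_norml => /andP [phi_ge _].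
  have : K * norm2 (s k - c) <= `|K| * norm2 (s k - c) by rewrite ler_wpM2r ?norm2_ge0 ?ler_norm.
  have := norm2_ge0 (s k - c) => sk_ge0 KK.
  have phik : phi c / 2 <= phi (s k) by nra.
  have phisk : 0 < phi (s k) by apply: lt_le_trans phik; rewrite divr_gt0.
  by rewrite -[2 / phi c]invf_div lef_pV2 ?posrE ?divr_gt0.
have B0 : 0 < B by apply: lt_le_trans (invB 0%N); rewrite invr_gt0 phi_pos.
exists B^-1 => [|k]; first by rewrite invr_gt0.
by rewrite -[phi (s k)]invrK lef_pV2 ?posrE ?invr_gt0 ?phi_pos.
Qed.

(* near a cluster point, short steps are controlled by the local Lipschitz constant,
   long steps by the bound on [phi] along the sequence *)
Lemma lipschitz_along phi : locally_lipschitz_on D phi ->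
  exists K, forall k, `|phi (s k.+1) - phi (s k)| <= K * norm2 (s k.+1 - s k).
Proof.
move=> phi_lip; have [B phiB] := locally_lipschitz_bounded phi_lip.
have B0 : 0 <= B by apply: le_trans (phiB 0%N).
pose ratio k := `|phi (s k.+1) - phi (s k)| / norm2 (s k.+1 - s k).
have [K ratioK] : exists K, forall k, ratio k <= K.
  apply: bounded_of_locally_bounded => c Dc.
  have [del del0 [K phiK]] := phi_lip c Dc.
  exists (del / 2); first by rewrite divr_gt0.
  exists (`|K| + 4 * B / del) => k skc.
  set d := norm2 (s k.+1 - s k); have d0 : 0 <= d by exact: norm2_ge0.
  have BK : 0 <= 4 * B / del by rewrite divr_ge0 ?mulr_ge0 ?ler0n ?(ltW del0).
  rewrite /ratio -/d; have [->|d_neq0] := eqVneq d 0.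
    by rewrite invr0 mulr0 addr_ge0 ?normr_ge0.
  have d_gt0 : 0 < d by rewrite lt_def d_neq0 d0.
  rewrite ler_pdivrMr //.
  have [d_small|d_large] := ltP d (del / 2).
  - have skc' : norm2 (s k - c) < del by have := ltW del0; lra.
    have sk1c : norm2 (s k.+1 - c) < del.
      by have := norm2_le_dist (s k.+1) (s k) c; rewrite -/d; lra.
    apply: le_trans (phiK _ _ (s_D k.+1) (s_D k) sk1c skc') _.
    by rewrite -/d ler_wpM2r // (le_trans (ler_norm K)) // lerDl.
  - have := ler_normB (phi (s k.+1)) (phi (s k)); have := phiB k; have := phiB k.+1.
    have : 2 * B <= 4 * B / del * d.
      rewrite mulrAC ler_pdivlMr //; have := ltW del0; nra.
    have : 0 <= `|K| * d by rewrite mulr_ge0 ?normr_ge0.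
    lra.
exists K => k; set d := norm2 (s k.+1 - s k).
have [d0|d_neq0] := eqVneq d 0.
  by rewrite d0 mulr0; move/norm2_eq0/eqP: d0; rewrite subr_eq0 => /eqP ->; rewrite subrr normr0.
have d_gt0 : 0 < d by rewrite lt_def d_neq0 norm2_ge0.
by rewrite -ler_pdivrMr //; exact: ratioK.
Qed.

End AlongSequence.

End Sequences.

Section PPGA.
Variables (R : realType) (n : nat)
  (f : 'rV[R]_n -> \bar R) (g h : 'rV[R]_n -> R)
  (grad_g grad_h : 'rV[R]_n -> 'rV[R]_n) (L : R)
  (alpha : nat -> R) (alo ahi : R) (x : nat -> 'rV[R]_n).
Hypotheses
  (Hf_ninf : forall u, f u != -oo%E)
  (A1i : forall u, omega_dom f g u -> exists2 delta : R, 0 < delta & exists K : R,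
     forall y z, omega_dom f g y -> omega_dom f g z ->
       norm2 (y - u) < delta -> norm2 (z - u) < delta ->
       `|fine (f y) - fine (f z)| <= K * norm2 (y - z))
  (A1ii : forall u, omega_dom f g u -> 0 < g u /\
     exists2 delta : R, 0 < delta & exists K : R,
       forall y z, norm2 (y - u) < delta -> norm2 (z - u) < delta ->
         is_grad g (grad_g y) y /\ norm2 (grad_g y - grad_g z) <= K * norm2 (y - z))
  (A1iii_L : 0 < L)
  (A1iii_grad : forall u, is_grad h (grad_h u) u)
  (A1iii_lip : forall u v, norm2 (grad_h u - grad_h v) <= L * norm2 (u - v))
  (A1iv_nonneg : forall u, f u \is a fin_num -> 0 <= fine (f u) + h u)
  (A1vi_lsc : lsc (Fobj f g h))
  (A1vi_lb : level_bounded (Fobj f g h))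
  (Halo : 0 < alo)
  (Halpha : forall k, alo <= alpha k <= ahi)
  (Hahi : ahi < 1 / L)
  (Hx0 : omega_dom f g (x 0%N))
  (Hiter : forall k : nat,
     prox (fun v => ((alpha k)%:E * (f v - (fine (Fobj f g h (x k)) * g v)%:E))%E)
          (x k - alpha k *: grad_h (x k)) (x k.+1)).

Notation vec := 'rV[R]_n.
Notation F := (Fobj f g h).
Notation dom := [set u | omega_dom f g u].

Let N u := fine (f u) + h u.
Let C k := fine (F (x k)).
Let a := ahi^-1 - L.

Lemma alpha_gt0 k : 0 < alpha k.
Proof. by have /andP [alo_le _] := Halpha k; apply: lt_le_trans alo_le. Qed.

Lemma ahi_gt0 : 0 < ahi.
Proof.
have /andP [alo_le le_ahi] := Halpha 0%N.
exact: lt_le_trans (lt_le_trans Halo alo_le) le_ahi.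
Qed.

Lemma a_gt0 : 0 < a.
Proof.
rewrite /a subr_gt0 -div1r ltr_pdivlMr ?ahi_gt0 // mulrC.
by move: Hahi; rewrite ltr_pdivlMr.
Qed.

Lemma dom_F u : dom u -> F u = (N u / g u)%:E.
Proof. by rewrite /Fobj /= => ->. Qed.

Lemma notdom_F u : ~ dom u -> F u = +oo%E.
Proof. by rewrite /Fobj /= => /negP/negbTE ->. Qed.

Lemma dom_fin u : dom u -> f u \is a fin_num.
Proof. by case/andP. Qed.

Lemma dom_g_gt0 u : dom u -> 0 < g u.
Proof. by move/A1ii => []. Qed.

Lemma iterate_fin k z : f z \is a fin_num -> f (x k.+1) \is a fin_num.
Proof.
move=> fz; rewrite fin_numE Hf_ninf /=; apply/negP => /eqP fy.
by have := Hiter k z; rewrite fy -(fineK fz) /= gt0_muley ?lte_fin ?alpha_gt0.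
Qed.

Lemma iterate_min k z : f z \is a fin_num ->
  fine (f (x k.+1)) - C k * g (x k.+1) + dot (grad_h (x k)) (x k.+1 - x k)
    + norm2 (x k.+1 - x k) ^+ 2 / (2 * alpha k)
  <= fine (f z) - C k * g z + dot (grad_h (x k)) (z - x k) + norm2 (z - x k) ^+ 2 / (2 * alpha k).
Proof.
move=> fz; apply: (prox_gradient_step_le (phi := fun v => fine (f v) - C k * g v)).
  exact: alpha_gt0.
have := Hiter k z; rewrite -(fineK fz) -(fineK (iterate_fin k fz)) /=.
by rewrite lee_fin.
Qed.

Lemma step_dom_descent k : dom (x k) ->
  dom (x k.+1) /\ N (x k.+1) + a / 2 * norm2 (x k.+1 - x k) ^+ 2 <= C k * g (x k.+1).
Proof.
move=> xk_dom; set y := x k.+1; set d := y - x k; set Q := norm2 d ^+ 2.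
have Q0 : 0 <= Q by exact: sqr_ge0.
have fk := dom_fin xk_dom; have gk := dom_g_gt0 xk_dom.
have CN : C k * g (x k) = N (x k) by rewrite /C dom_F //= divfK ?lt0r_neq0.
have := iterate_min k fk.
rewrite /= subrr -(scale0r (0 : vec)) dotZr norm2Z norm2_0 mulr0 expr0n /= mul0r.
rewrite mul0r !addr0 -/y -/d -/Q => yk.
have desc := descent_lemma A1iii_grad A1iii_lip (x k) d.
rewrite [x k + d]addrC subrK -/y -/Q in desc.
have Q_ahi : Q / (2 * ahi) <= Q / (2 * alpha k).
  rewrite ler_wpM2l // lef_pV2 ?posrE ?mulr_gt0 ?ahi_gt0 ?alpha_gt0 //.
  by rewrite ler_pM2l //; have /andP [] := Halpha k.
have a_Q : a / 2 * Q = Q / (2 * ahi) - L / 2 * Q.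
  by rewrite /a; field; rewrite lt0r_neq0 ?ahi_gt0.
have descent : N y + a / 2 * Q <= C k * g y by move: CN; rewrite /N; lra.
have fy := iterate_fin k fk.
suff gy0 : g y != 0 by split; rewrite // /= /omega_dom gy0 fy.
apply/eqP => gy0; move: descent; rewrite gy0 mulr0.
have := A1iv_nonneg fy; rewrite -/(N y) => Ny0 aQ.
have : Q == 0.
  rewrite eq_le Q0 andbT -(pmulr_rle0 _ (divr_gt0 a_gt0 (ltr0Sn _ 1))); lra.
rewrite /Q sqrf_eq0 => /eqP/norm2_eq0/eqP; rewrite subr_eq0 => /eqP yxk.
by move: gk; rewrite -yxk gy0 ltxx.
Qed.

Lemma iterate_dom k : omega_dom f g (x k).
Proof. by elim: k => // k /step_dom_descent []. Qed.

Lemma iterate_F k : F (x k) = (C k)%:E.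
Proof. by rewrite /C dom_F //; apply: iterate_dom. Qed.

Lemma iterate_N k : N (x k) = C k * g (x k).
Proof.
have xk_dom := iterate_dom k.
by rewrite /C dom_F //= divfK ?lt0r_neq0 ?dom_g_gt0.
Qed.

Lemma C_descent k : C k.+1 + a / 2 * norm2 (x k.+1 - x k) ^+ 2 / g (x k.+1) <= C k.
Proof.
have [_] := step_dom_descent (iterate_dom k).
have gy := dom_g_gt0 (iterate_dom k.+1).
rewrite iterate_N => desc.
by rewrite -(ler_pM2r gy) mulrDl divfK ?lt0r_neq0.
Qed.

Lemma C_ge0 k : 0 <= C k.
Proof.
have := A1iv_nonneg (dom_fin (iterate_dom k)); rewrite -/(N _) iterate_N.
by rewrite pmulr_lge0 // dom_g_gt0 //; apply: iterate_dom.
Qed.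

Lemma C_le0 k : C k <= C 0.
Proof.
elim: k => // k; apply: le_trans; apply: le_trans (C_descent k); rewrite lerDl.
have gk := dom_g_gt0 (iterate_dom k.+1).
by rewrite divr_ge0 ?(ltW gk) // mulr_ge0 ?sqr_ge0 // divr_ge0 // ltW // a_gt0.
Qed.

Lemma iterate_cluster (kk : nat -> nat) : exists2 c, dom c & cluster_point (x \o kk) c.
Proof.
have sublevel j : (F ((x \o kk) j) <= (C 0)%:E)%E by rewrite /= iterate_F lee_fin C_le0.
have [c Fc c_cluster] := sublevel_cluster_point A1vi_lsc A1vi_lb sublevel.
exists c => //; apply: contrapT => /notdom_F Fc_oo.
by move: Fc; rewrite Fc_oo leNgt ltey.
Qed.

Lemma g_lipschitz_grad : locally_lipschitz_grad dom g grad_g.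
Proof. by move=> c /A1ii []. Qed.

Lemma h_lipschitz_grad : locally_lipschitz_grad dom h grad_h.
Proof. by move=> c _; exists 1 => //; exists L => y z _ _; split. Qed.

Lemma N_lipschitz : locally_lipschitz_on dom N.
Proof.
apply: locally_lipschitz_onD; first exact: A1i.
exact: locally_lipschitz_on_grad h_lipschitz_grad.
Qed.

Lemma g_iterate_bounded : exists2 G, 0 < G & forall k, g (x k) <= G.
Proof.
have [G gG] := locally_lipschitz_bounded iterate_dom iterate_cluster
  (locally_lipschitz_on_grad g_lipschitz_grad).
have g_le k : g (x k) <= G by apply: le_trans (gG k); exact: ler_norm.
by exists G => //; apply: lt_le_trans (g_le 0%N); apply: dom_g_gt0.
Qed.

Lemma sufficient_decrease : exists2 a' : R, 0 < a' & forall k : nat,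
  (F (x k.+1) + (a' / 2 * norm2 (x k.+1 - x k) ^+ 2)%:E <= F (x k))%E.
Proof.
have [G G0 gG] := g_iterate_bounded.
exists (a / G) => [|k]; first by rewrite divr_gt0 ?a_gt0.
rewrite !iterate_F -EFinD lee_fin; apply: le_trans (C_descent k); rewrite lerD2l.
have gy := dom_g_gt0 (iterate_dom k.+1).
set Q := norm2 (x k.+1 - x k) ^+ 2.
have -> : a / G / 2 * Q = a / 2 * Q / G by field; rewrite lt0r_neq0.
apply: ler_wpM2l; first by rewrite mulr_ge0 ?divr_ge0 ?sqr_ge0 ?(ltW a_gt0).
by rewrite lef_pV2 ?posrE.
Qed.

Lemma C_lipschitz : exists K, forall k,
  `|C k - C k.+1| <= K * norm2 (x k.+1 - x k).
Proof.
have [m m0 gm] := locally_lipschitz_bounded_below iterate_dom iterate_cluster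
  (locally_lipschitz_on_grad g_lipschitz_grad) dom_g_gt0.
have [KN NK] := lipschitz_along iterate_dom iterate_cluster N_lipschitz.
have [Kg gK] := lipschitz_along iterate_dom iterate_cluster (locally_lipschitz_on_grad g_lipschitz_grad).
exists ((KN + C 0 * Kg) / m) => k; set d := norm2 (x k.+1 - x k).
have gk := dom_g_gt0 (iterate_dom k).
have split_C : g (x k) * (C k - C k.+1) =
    - (N (x k.+1) - N (x k)) + C k.+1 * (g (x k.+1) - g (x k)).
  by rewrite !iterate_N; ring.
have Cg : `|C k.+1 * (g (x k.+1) - g (x k))| <= C 0 * (Kg * d).
  by rewrite normrM ger0_norm ?C_ge0 // ler_pM ?C_ge0 ?normr_ge0 ?C_le0.
have mC : `|C k - C k.+1| * m <= (KN + C 0 * Kg) * d.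
  apply: (@le_trans _ _ (g (x k) * `|C k - C k.+1|)).
    by rewrite mulrC ler_wpM2r ?normr_ge0.
  rewrite -[g (x k)]ger0_norm ?(ltW gk) // -normrM split_C.
  apply: le_trans (ler_normD _ _) _; rewrite normrN.
  have := NK k; rewrite -/d; lra.
by rewrite mulrAC ler_pdivlMr.
Qed.

Lemma g_is_grad u : dom u -> is_grad g (grad_g u) u.
Proof.
move=> /g_lipschitz_grad [del del0 [K gK]].
by have [] := gK u u; rewrite subrr norm2_0.
Qed.

Let u k := - (grad_h (x k) + (alpha k)^-1 *: (x k.+1 - x k))
  + C k *: grad_g (x k.+1) + grad_h (x k.+1).
Let w k := (g (x k.+1))^-1 *: (u k - C k.+1 *: grad_g (x k.+1)).

Lemma N_subgrad k : frechet_subgrad_on dom N (x k.+1) (u k).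
Proof.
have prox_part := frechet_subgrad_on_prox (phi := fun v => fine (f v) - C k * g v)
  (alpha_gt0 k) (fun z z_dom => iterate_min k (dom_fin z_dom)).
have g_part := frechet_subgrad_onZ (C_ge0 k)
  (frechet_subgrad_on_grad dom (g_is_grad (iterate_dom k.+1))).
have h_part := frechet_subgrad_on_grad dom (A1iii_grad (x k.+1)).
have -> : N = fun v => fine (f v) - C k * g v + C k * g v + h v.
  by apply/funext => v; rewrite subrK.
exact: frechet_subgrad_onD (frechet_subgrad_onD prox_part g_part) h_part.
Qed.

Lemma F_subgrad k : frechet_subdiff F (x k.+1) (w k).
Proof.
have y_dom := iterate_dom k.+1.
apply: (frechet_subdiff_of_subgrad_on (D := dom) (psi := fun v => N v / g v)) => //.
- exact: dom_F.
- exact: notdom_F.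
- have := frechet_subgrad_on_div (N_subgrad k) (g_is_grad y_dom) (dom_g_gt0 y_dom).
  by rewrite /w /C (dom_F y_dom).
Qed.

Lemma subgrad_bound : exists2 b : R, 0 < b & forall k,
  norm2 (w k) <= b * norm2 (x k.+1 - x k).
Proof.
have [m m0 gm] := locally_lipschitz_bounded_below iterate_dom iterate_cluster
  (locally_lipschitz_on_grad g_lipschitz_grad) dom_g_gt0.
have [Gg gradgG] := locally_lipschitz_bounded iterate_dom iterate_cluster
  (locally_lipschitz_on_norm_grad g_lipschitz_grad).
have [KC CK] := C_lipschitz.
set K := `|KC| * `|Gg| + alo^-1 + L.
have K0 : 0 < K.
  have : 0 <= `|KC| * `|Gg| by rewrite mulr_ge0 ?normr_ge0.
  have : 0 < alo^-1 by rewrite invr_gt0.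
  by have := A1iii_L; rewrite /K; lra.
exists (K / m) => [|k]; first by rewrite divr_gt0.
set d := norm2 (x k.+1 - x k); have d0 : 0 <= d by exact: norm2_ge0.
have gy := dom_g_gt0 (iterate_dom k.+1); have al0 := alpha_gt0 k.
rewrite /w norm2Z ger0_norm ?invr_ge0 ?(ltW gy) //.
have -> : u k - C k.+1 *: grad_g (x k.+1) = (C k - C k.+1) *: grad_g (x k.+1)
    - ((alpha k)^-1 *: (x k.+1 - x k) + (grad_h (x k) - grad_h (x k.+1))).
  by apply/rowP => i; rewrite !mxE; ring.
have C_part : `|C k - C k.+1| * norm2 (grad_g (x k.+1)) <= `|KC| * `|Gg| * d.
  rewrite mulrAC; apply: ler_pM; rewrite ?normr_ge0 ?norm2_ge0 //.
    by apply: le_trans (CK k) _; rewrite ler_wpM2r ?ler_norm.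
  by apply: le_trans (ler_norm _) (le_trans (gradgG _) (ler_norm _)).
have alpha_part : `|(alpha k)^-1| * d <= alo^-1 * d.
  rewrite ler_wpM2r // ger0_norm ?invr_ge0 ?(ltW al0) // lef_pV2 ?posrE //.
  by have /andP [] := Halpha k.
have h_part : norm2 (grad_h (x k) - grad_h (x k.+1)) <= L * d.
  by rewrite /d norm2_distC; apply: A1iii_lip.
have v_bound : norm2 ((C k - C k.+1) *: grad_g (x k.+1)
    - ((alpha k)^-1 *: (x k.+1 - x k) + (grad_h (x k) - grad_h (x k.+1)))) <= K * d.
  apply: le_trans (norm2_dist_le _ _) _.
  apply: le_trans (lerD (lexx _) (norm2_triangle _ _)) _.
  by rewrite !norm2Z /K -/d; lra.
apply: (@le_trans _ _ ((g (x k.+1))^-1 * (K * d))).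
  by apply: ler_wpM2l; rewrite ?invr_ge0 ?(ltW gy).
rewrite [K / m * d]mulrAC mulrC; apply: ler_wpM2l; first by rewrite mulr_ge0 ?(ltW K0).
by rewrite lef_pV2 ?posrE.
Qed.

Lemma relative_error : exists2 b : R, 0 < b & exists w : nat -> vec, forall k : nat,
  limiting_subdiff F (x k.+1) (w k) /\ norm2 (w k) <= b * norm2 (x k.+1 - x k).
Proof.
have [b b0 wb] := subgrad_bound.
exists b => //; exists w => k; split; last exact: wb.
exact/frechet_subdiff_limiting/F_subgrad.
Qed.

End PPGA.

Theorem mainTheorem11 (R : realType) (n : nat)
  (f : 'rV[R]_n -> \bar R) (g h : 'rV[R]_n -> R)
  (grad_g grad_h : 'rV[R]_n -> 'rV[R]_n) (L : R)
  (alpha : nat -> R) (alo ahi : R) (x : nat -> 'rV[R]_n)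
  (Hf_ninf : forall u, f u != -oo%E)
  (Hf_proper : exists u, f u \is a fin_num)
  (Hf_lsc : lsc f)
  (A1i : forall u, omega_dom f g u -> exists2 delta : R, 0 < delta & exists K : R,
     forall y z, omega_dom f g y -> omega_dom f g z ->
       norm2 (y - u) < delta -> norm2 (z - u) < delta ->
       `|fine (f y) - fine (f z)| <= K * norm2 (y - z))
  (A1ii : forall u, omega_dom f g u -> 0 < g u /\
     exists2 delta : R, 0 < delta & exists K : R,
       forall y z, norm2 (y - u) < delta -> norm2 (z - u) < delta ->
         is_grad g (grad_g y) y /\ norm2 (grad_g y - grad_g z) <= K * norm2 (y - z))
  (A1iii_L : 0 < L)
  (A1iii_grad : forall u, is_grad h (grad_h u) u)
  (A1iii_lip : forall u v, norm2 (grad_h u - grad_h v) <= L * norm2 (u - v))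
  (A1iv_nonneg : forall u, f u \is a fin_num -> 0 <= fine (f u) + h u)
  (A1iv_ne : exists u, omega_dom f g u)
  (A1v : forall (u : 'rV[R]_n) (gam : R), 0 <= gam ->
     exists p, prox (fun v => (f v - (gam * g v)%:E)%E) u p)
  (A1vi_lsc : lsc (Fobj f g h))
  (A1vi_lb : level_bounded (Fobj f g h))
  (Halo : 0 < alo)
  (Halpha : forall k, alo <= alpha k <= ahi)
  (Hahi : ahi < 1 / L)
  (Hx0 : omega_dom f g (x 0%N))
  (Hiter : forall k : nat,
     prox (fun v => ((alpha k)%:E * (f v - (fine (Fobj f g h (x k)) * g v)%:E))%E)
          (x k - alpha k *: grad_h (x k)) (x k.+1)) :
  (exists2 a : R, 0 < a & forall k : nat,
     (Fobj f g h (x k.+1) + (a / 2 * norm2 (x k.+1 - x k) ^+ 2)%:E <= Fobj f g h (x k))%E)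
  /\
  (exists2 b : R, 0 < b & exists w : nat -> 'rV[R]_n, forall k : nat,
     limiting_subdiff (Fobj f g h) (x k.+1) (w k) /\
     norm2 (w k) <= b * norm2 (x k.+1 - x k)).
Proof.
split.
- exact: (sufficient_decrease Hf_ninf A1ii A1iii_L A1iii_grad A1iii_lip A1iv_nonneg
    A1vi_lsc A1vi_lb Halo Halpha Hahi Hx0 Hiter).
- exact: (relative_error Hf_ninf A1i A1ii A1iii_L A1iii_grad A1iii_lip A1iv_nonneg
    A1vi_lsc A1vi_lb Halo Halpha Hahi Hx0 Hiter).
Qed.
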